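(* Let $\alpha,\beta,\gamma\in\mathbb{C}$ and $k\in\mathbb{N}$, and consider the difference equation $$z_{n+1}=\frac{\alpha+\beta z_{n-k}}{\gamma-z_n},\qquad n=0,1,2,\ldots,$$ with complex initial conditions $z_{-k},\dots,z_{-1},z_0$. Let $s=\sqrt{(\beta-\gamma)^2-4\alpha}=\sqrt{-4\alpha+\beta^2-2\beta\gamma+\gamma^2}$ and let $\bar z_2=\frac{1}{2}\left(s-\beta+\gamma\right)$, which is a fixed point of the equation. If $$\left|\frac{2\beta}{-s+\beta+\gamma}\right|+\left|\frac{\gamma\left(s-\beta+\gamma\right)-2\alpha}{2(\alpha+\beta\gamma)}\right|<1,$$ then $\bar z_2$ is locally asymptotically stable.
   Context: Here $\sqrt{\cdot}$ denotes a fixed complex square root, used consistently in all occurrences. A fixed point $\bar z$ of $z_{n+1}=f(z_n,\dots,z_{n-k})$ is a point with $\bar z=f(\bar z,\dots,\bar z)$. It is locally asymptotically stable if for every $\epsilon>0$ there is $\delta>0$ such that $|z_{-k}-\bar z|+\dots+|z_0-\bar z|<\delta$ implies $|z_n-\bar z|<\epsilon$ for all $n\ge -k$ (and solutions converge to $\bar z$), as determined via the linearization of the equation at $\bar z$. *)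

From HB Require Import structures.
From mathcomp Require Import all_boot all_order all_algebra.
From mathcomp Require Import complex.
From mathcomp Require Import reals.
Set Implicit Arguments. Unset Strict Implicit. Unset Printing Implicit Defensive.
Import Order.TTheory GRing.Theory Num.Theory.
Local Open Scope ring_scope.
Local Open Scope complex_scope.

(* A solution of z_{n+1} = (alpha + beta z_{n-k}) / (gamma - z_n), reindexed:
   x i = z_{i-k}, so x 0, ..., x k are the initial conditions z_{-k},...,z_0,
   and the recurrence reads x (n + k + 1) = (alpha + beta x n)/(gamma - x (n + k)). *)
Definition is_solution (R : realType) (alpha beta gamma : R[i]) (k : nat)
  (x : nat -> R[i]) : Prop :=
  forall n : nat, x (n + k.+1)%N = (alpha + beta * x n) / (gamma - x (n + k)%N).

Definition is_fixed_point (R : realType) (alpha beta gamma : R[i]) (zb : R[i]) : Prop :=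
  zb = (alpha + beta * zb) / (gamma - zb).

Definition loc_asympt_stable (R : realType) (alpha beta gamma : R[i]) (k : nat)
  (zb : R[i]) : Prop :=
  (forall eps : R[i], 0 < eps -> exists2 delta : R[i], 0 < delta &
     forall x, is_solution alpha beta gamma k x ->
       \sum_(i < k.+1) `|x i - zb| < delta -> forall n, `|x n - zb| < eps) /\
  (exists2 delta0 : R[i], 0 < delta0 &
     forall x, is_solution alpha beta gamma k x ->
       \sum_(i < k.+1) `|x i - zb| < delta0 ->
       forall e : R[i], 0 < e -> exists N : nat, forall n, (N <= n)%N -> `|x n - zb| < e).

From HB Require Import structures.
From mathcomp Require Import all_boot all_order all_algebra.
From mathcomp Require Import complex reals.
From mathcomp Require Import ring lra zify.
Import Order.TTheory GRing.Theory Num.Theory ComplexField.Normc.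
Local Open Scope ring_scope.
Local Open Scope complex_scope.

(* Write [z] for the fixed point and [e n := x n - z] for the error of a solution.
   Since [z] is a root of [X^2 + (beta - gamma) X + alpha], the recurrence becomes
   [e (n + k + 1) = (beta * e n + z * e (n + k)) / (gamma - x (n + k))], and the two
   coefficients of the hypothesis are [beta / (gamma - z)] and [z / (gamma - z)], so it
   says [|beta| + |z| < |gamma - z|]. While the errors stay below a small [rho], the
   denominator has modulus at least [|gamma - z| - rho], hence each new error is at most
   [q < 1] times the larger of the two errors it depends on: the errors decay like
   [q ^ (n / (k + 1))], which gives both stability and attraction. *)


Section RealNorm.
Context {R : rcfType}.
Implicit Types x y w : R[i].

Lemma normr_normc x : `|x| = (normc x)%:C.
Proof. by case: x. Qed.

Lemma normc_ge0 x : 0 <= normc x.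
Proof. by case: x => a b; exact: sqrtr_ge0. Qed.

Lemma normc_gt0 x : x != 0 -> 0 < normc x.
Proof. by move=> x0; rewrite -ltcR -normr_normc normr_gt0. Qed.

Lemma normc_div x y : normc (x / y) = normc x / normc y.
Proof. by rewrite normcM normcV. Qed.

Lemma complex_gt0_real (e : R[i]) : 0 < e -> exists2 r : R, 0 < r & e = r%:C.
Proof.
move=> e0; have e_real : e \is Num.real by exact: gtr0_real.
by exists (complex.Re e); rewrite ?RRe_real // -ltcR RRe_real.
Qed.

Lemma normc_add_lt_of_ratios x y w : w != 0 ->
  `|x / w| + `|y / w| < 1 -> normc x + normc y < normc w.
Proof.
move=> w0; rewrite !normr_normc !normc_div -rmorphD -(rmorph1 (real_complex R)).
by rewrite ltcR -mulrDl ltr_pdivrMr ?normc_gt0 // mul1r.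
Qed.

End RealNorm.

Lemma exprn_bernoulli_le1 (R : realDomainType) (q : R) (n : nat) :
  0 <= q <= 1 -> q ^+ n * (1 + n%:R * (1 - q)) <= 1.
Proof.
move=> /andP[q0 q1]; elim: n => [|n IH]; first by rewrite expr0 mul0r addr0 mulr1.
have qn1 : q ^+ n.+1 <= 1 by exact: exprn_ile1.
have -> : q ^+ n.+1 * (1 + n.+1%:R * (1 - q))
    = q * (q ^+ n * (1 + n%:R * (1 - q))) + q ^+ n.+1 * (1 - q).
  by rewrite exprS -natr1; ring.
have : q * (q ^+ n * (1 + n%:R * (1 - q))) <= q by rewrite ler_piMr.
have : q ^+ n.+1 * (1 - q) <= 1 - q by rewrite ler_piMl // subr_ge0.
lra.
Qed.

Lemma geometric_lt (R : archiRealFieldType) (q M e : R) :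
  0 <= q < 1 -> 0 < e -> exists j : nat, M * q ^+ j < e.
Proof.
move=> /andP[q0 q1] e0; have [M0|M0] := lerP M 0.
  by exists 0%N; rewrite mulr1; exact: le_lt_trans e0.
set h := 1 - q; have h0 : 0 < h by rewrite subr_gt0.
have Meh0 : 0 <= M / (e * h) by rewrite divr_ge0 ?mulr_ge0 ?ltW.
exists (Num.Def.archi_bound (M / (e * h))); set j := Num.Def.archi_bound _.
have Mj : M < e * (j%:R * h).
  by rewrite mulrCA -ltr_pdivrMr ?mulr_gt0 //; exact: archi_boundP.
have pos : 0 < 1 + j%:R * h by rewrite ltr_pwDl // mulr_ge0 ?ltW.
rewrite -(ltr_pM2r pos) -mulrA.
have : M * (q ^+ j * (1 + j%:R * h)) <= M * 1.
  by rewrite ler_wpM2l ?(ltW M0) // exprn_bernoulli_le1 // q0 ltW.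
rewrite mulr1; lra.
Qed.

Lemma delayed_contraction (R : realFieldType) (k : nat) (a : nat -> R) (q M : R) :
  0 <= q <= 1 -> 0 <= M -> (forall i, (i <= k)%N -> a i <= M) ->
  (forall m T, T <= M -> a m <= T -> a (m + k)%N <= T -> a (m + k.+1)%N <= q * T) ->
  forall n, a n <= M * q ^+ (n %/ k.+1).
Proof.
move=> /andP[q0 q1] M0 a_init a_step n; elim/ltn_ind: n => n IH.
have [nk|kn] := leqP n k; first by rewrite divn_small // mulr1; exact: a_init.
rewrite -(subnK kn); set m := (n - k.+1)%N.
have [m_lt mk_lt] : (m < n)%N /\ (m + k < n)%N by rewrite /m; lia.
have -> : ((m + k.+1) %/ k.+1 = (m %/ k.+1).+1)%N.
  by rewrite -{1}(mul1n k.+1) divnDMl // addn1.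
rewrite exprS mulrCA; apply: a_step; first by rewrite ler_piMr // exprn_ile1.
  exact: IH.
apply: le_trans (IH _ mk_lt) _; rewrite ler_wpM2l // ler_wiXn2l //.
by rewrite leq_div2r // leq_addr.
Qed.

Lemma delayed_recursive_ineq_decay (R : realFieldType) (k : nat) (b c D : R) :
  0 <= b -> 0 <= c -> b + c < D ->
  exists2 rho : R, 0 < rho & exists2 q : R, 0 <= q < 1 &
    forall (a : nat -> R) (M : R),
      (forall m r, a (m + k)%N <= r -> r < D ->
         a (m + k.+1)%N * (D - r) <= b * a m + c * a (m + k)%N) ->
      0 <= M -> M <= rho -> (forall i, (i <= k)%N -> a i <= M) ->
      forall n, a n <= M * q ^+ (n %/ k.+1).
Proof.
move=> b0 c0 bcD; set rho := (D - b - c) / 2%:R.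
have rho0 : 0 < rho by rewrite /rho; lra.
have Drho0 : 0 < D - rho by rewrite /rho; lra.
set q := (b + c) / (D - rho).
have q0 : 0 <= q := divr_ge0 (addr_ge0 b0 c0) (ltW Drho0).
have q1 : q < 1 by rewrite ltr_pdivrMr // mul1r /rho; lra.
exists rho => //; exists q; first by rewrite q0.
move=> a M a_step M0 M_rho a_init.
apply: delayed_contraction => //; first by rewrite q0 ltW.
move=> m T T_M am_T amk_T; rewrite mulrAC ler_pdivlMr //.
apply: le_trans (a_step m rho _ _) _; [lra | lra |].
have : b * a m <= b * T by rewrite ler_wpM2l.
have : c * a (m + k)%N <= c * T by rewrite ler_wpM2l.
lra.
Qed.

Lemma normc_le_of_sum_lt (R : rcfType) (x : nat -> R[i]) (z : R[i]) (k : nat)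
    (d : R) :
  \sum_(i < k.+1) `|x i - z| < d%:C -> forall i, (i <= k)%N -> normc (x i - z) <= d.
Proof.
move=> sum_lt i ik; apply: ltW; rewrite -ltcR -normr_normc; apply: le_lt_trans sum_lt.
rewrite (bigD1 (Ordinal (ik : (i < k.+1)%N))) //= lerDl.
by apply: sumr_ge0 => j _; exact: normr_ge0.
Qed.

Lemma loc_asympt_stable_of_geometric (R : realType) (alpha beta gamma z : R[i])
    (k : nat) (rho q : R) :
  0 < rho -> 0 <= q < 1 ->
  (forall x, is_solution alpha beta gamma k x -> forall M, 0 <= M -> M <= rho ->
     (forall i, (i <= k)%N -> normc (x i - z) <= M) ->
     forall n, normc (x n - z) <= M * q ^+ (n %/ k.+1)) ->
  loc_asympt_stable alpha beta gamma k z.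
Proof.
move=> rho0 q01 decay; have /andP[q0 q1] := q01.
split.
  move=> _ /complex_gt0_real[e e0 ->]; set d := Num.min (e / 2%:R) rho.
  have d0 : 0 < d by rewrite lt_min rho0 divr_gt0.
  exists d%:C => [|x x_sol sum_lt n]; first by rewrite ltcR.
  rewrite normr_normc ltcR; apply: le_lt_trans (decay x x_sol d (ltW d0) _ _ n) _.
  - by rewrite ge_min lexx orbT.
  - exact: normc_le_of_sum_lt.
  have : d <= e / 2%:R by rewrite ge_min lexx.
  have : d * q ^+ (n %/ k.+1) <= d.
    by rewrite ler_piMr ?exprn_ile1 ?(ltW d0) ?(ltW q1).
  lra.
exists rho%:C => [|x x_sol sum_lt _ /complex_gt0_real[e e0 ->]]; first by rewrite ltcR.
have [j rhoqj] := @geometric_lt _ q rho e q01 e0.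
exists (j * k.+1)%N => n jn; rewrite normr_normc ltcR.
apply: le_lt_trans (decay x x_sol rho (ltW rho0) (lexx _) _ n) _.
  exact: normc_le_of_sum_lt.
apply: le_lt_trans rhoqj; rewrite ler_wpM2l ?(ltW rho0) //.
by apply: ler_wiXn2l => //; [exact: ltW | rewrite leq_divRL].
Qed.

Section FixedPointStability.
Variables (R : realType) (alpha beta gamma z : R[i]) (k : nat).
Hypothesis z_root : z ^+ 2 + (beta - gamma) * z + alpha = 0.

Local Notation nD := (normc (gamma - z)).
Local Notation nb := (normc beta).
Local Notation nz := (normc z).

Lemma fixed_point_of_root : gamma - z != 0 -> is_fixed_point alpha beta gamma z.
Proof.
move=> gz0; rewrite /is_fixed_point -[z in LHS](mulfK gz0); congr (_ / _).
by apply/eqP; rewrite eq_sym -subr_eq0 -z_root; apply/eqP; ring.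
Qed.

Lemma step_error (w y : R[i]) : gamma - y != 0 ->
  (alpha + beta * w) / (gamma - y) - z = (beta * (w - z) + z * (y - z)) / (gamma - y).
Proof.
move=> gy0; rewrite -[z in LHS](mulfK gy0) -mulrBl; congr (_ / _).
by apply/eqP; rewrite -subr_eq0 -z_root; apply/eqP; ring.
Qed.

(* The denominator stays away from 0 because [|gamma - y| >= |gamma - z| - |y - z|]. *)
Lemma step_error_le (w y : R[i]) (r : R) : normc (y - z) <= r -> r < nD ->
  normc ((alpha + beta * w) / (gamma - y) - z) * (nD - r)
    <= nb * normc (w - z) + nz * normc (y - z).
Proof.
move=> yz_le r_lt.
have nD_le : nD <= normc (gamma - y) + normc (y - z).
  by have := le_normcD (gamma - y) (y - z); rewrite addrA subrK.
have gy_gt0 : 0 < normc (gamma - y) by lra.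
have gy0 : gamma - y != 0 by apply: contraTneq gy_gt0 => ->; rewrite normc0 ltxx.
have num_le : normc (beta * (w - z) + z * (y - z))
    <= nb * normc (w - z) + nz * normc (y - z).
  by have := le_normcD (beta * (w - z)) (z * (y - z)); rewrite !normcM.
rewrite step_error // normc_div; apply: le_trans num_le.
rewrite -[leRHS](divfK (lt0r_neq0 gy_gt0)); apply: ler_wpM2l; last lra.
by rewrite divr_ge0 ?normc_ge0.
Qed.

Lemma loc_asympt_stable_of_root :
  nb + nz < nD -> loc_asympt_stable alpha beta gamma k z.
Proof.
move=> norm_lt; have [rho rho0 [q q01 decay]] :=
  @delayed_recursive_ineq_decay _ k _ _ _ (normc_ge0 beta) (normc_ge0 z) norm_lt.
apply: (@loc_asympt_stable_of_geometric _ _ _ _ z _ rho q rho0 q01).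
move=> x x_sol M M0 M_rho x_init.
by apply: decay => // m r xmk_r r_lt; rewrite x_sol; exact: step_error_le.
Qed.

End FixedPointStability.

Theorem theorem2p2 (R : realType) (alpha beta gamma s : R[i]) (k : nat) :
  s ^+ 2 = - 4%:R * alpha + beta ^+ 2 - 2%:R * beta * gamma + gamma ^+ 2 ->
  - s + beta + gamma != 0 ->
  alpha + beta * gamma != 0 ->
  `| 2%:R * beta / (- s + beta + gamma) |
    + `| (gamma * (s - beta + gamma) - 2%:R * alpha) / (2%:R * (alpha + beta * gamma)) | < 1 ->
  is_fixed_point alpha beta gamma ((s - beta + gamma) / 2%:R) /\
  loc_asympt_stable alpha beta gamma k ((s - beta + gamma) / 2%:R).
Proof.
move=> s_sq Ds0 ab0 ratio_lt; have two0 : 2%:R != 0 :> R[i] by rewrite pnatr_eq0.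
set z := (s - beta + gamma) / 2%:R.
have z_root : z ^+ 2 + (beta - gamma) * z + alpha = 0.
  apply: (mulfI (mulf_neq0 two0 two0)); rewrite mulr0.
  by rewrite -[RHS](subrr (s ^+ 2)) {2}s_sq /z; field.
have Ds_eq : - s + beta + gamma = 2%:R * (gamma - z) by rewrite /z; field.
have gz0 : gamma - z != 0 by apply: contraNneq Ds0 => gz; rewrite Ds_eq gz mulr0.
have ratio1 : 2%:R * beta / (- s + beta + gamma) = beta / (gamma - z).
  by rewrite Ds_eq; field; rewrite ?two0 ?gz0.
have ratio2 : (gamma * (s - beta + gamma) - 2%:R * alpha)
    / (2%:R * (alpha + beta * gamma)) = z / (gamma - z).
  apply/eqP; rewrite eqr_div ?mulf_neq0 //; apply/eqP.
  rewrite -[s - beta + gamma](mulfVK two0) -/z.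
  apply/eqP; rewrite -subr_eq0 -(mulr0 (- 2%:R * gamma)) -z_root.
  by apply/eqP; ring.
rewrite ratio1 ratio2 in ratio_lt.
split; first exact: fixed_point_of_root z_root gz0.
have norm_lt := normc_add_lt_of_ratios _ _ _ gz0 ratio_lt.
exact: loc_asympt_stable_of_root z_root norm_lt.
Qed.
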